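(* A commutative ring $R$ is absolutely flat if and only if the canonical map $\eta:R\to R^{(-1)}R$ is bijective.
   Context: A commutative ring is absolutely flat if every module over it is flat. For $a,b$ in a commutative ring, $b$ is a pointwise inverse of $a$ if $a=a^2b$ and $b=b^2a$. For a subset $S\subseteq R$, $S^{(-1)}R=R[x_s:s\in S]/I$ where $I$ is generated by $sx_s^2-x_s$ and $s^2x_s-s$ ($s\in S$), and $\eta$ is the canonical map; here $S=R$. *)

From HB Require Import structures.
From mathcomp Require Import all_boot all_order all_algebra.
Set Implicit Arguments. Unset Strict Implicit. Unset Printing Implicit Defensive.
Import GRing.Theory.
Local Open Scope ring_scope.

Definition is_linear (R : pzRingType) (U V : lmodType R) (f : U -> V) : Prop :=
  forall (a : R) (x y : U), f (a *: x + y) = a *: f x + f y.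

Definition is_bilinear (R : pzRingType) (U V W : lmodType R)
    (f : U -> V -> W) : Prop :=
  (forall v : V, is_linear (fun u => f u v)) /\
  (forall u : U, is_linear (f u)).

(* The element  sum_i n_i (x) m_i  of the tensor product N (x)_R M, given by
   the list s = [:: (n_1, m_1); ...; (n_k, m_k)], is zero.  By the universal
   property of the tensor product, this holds iff every R-bilinear map
   f : N x M -> P sends the formal sum to 0 (take P = N (x) M for the
   converse). *)
Definition tensor_zero (R : comPzRingType) (N M : lmodType R)
    (s : seq (N * M)) : Prop :=
  forall (P : lmodType R) (f : N -> M -> P), is_bilinear f ->
    \sum_(p <- s) f p.1 p.2 = 0.

(* M is flat: for every injective R-linear map g : N -> N', the induced map
   g (x) id_M : N (x) M -> N' (x) M is injective (equivalently, since it is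
   linear, has trivial kernel; every element of N (x) M is a finite sum of
   pure tensors). *)
Definition flat (R : comPzRingType) (M : lmodType R) : Prop :=
  forall (N N' : lmodType R) (g : N -> N'), is_linear g -> injective g ->
    forall s : seq (N * M),
      tensor_zero (map (fun p => (g p.1, p.2)) s) -> tensor_zero s.

Definition absolutely_flat (R : comPzRingType) : Prop :=
  forall M : lmodType R, flat M.

Inductive pterm (R : Type) : Type :=
  | TC : R -> pterm R
  | TX : R -> pterm R
  | TAdd : pterm R -> pterm R -> pterm R
  | TOpp : pterm R -> pterm R
  | TMul : pterm R -> pterm R -> pterm R.

(* The congruence on expressions whose quotient is R[x_s : s in R] / I:
   commutative ring axioms, TC a ring morphism (so the quotient by the first
   group of rules is the free commutative R-algebra R[x_s : s in R]), plus
   the generators  s x_s^2 - x_s  and  s^2 x_s - s  of the ideal I. *)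
Inductive pinv_eq (R : comPzRingType) : pterm R -> pterm R -> Prop :=
  | pe_refl t : pinv_eq t t
  | pe_sym t u : pinv_eq t u -> pinv_eq u t
  | pe_trans t u v : pinv_eq t u -> pinv_eq u v -> pinv_eq t v
  | pe_add t t' u u' : pinv_eq t t' -> pinv_eq u u' ->
      pinv_eq (TAdd t u) (TAdd t' u')
  | pe_opp t t' : pinv_eq t t' -> pinv_eq (TOpp t) (TOpp t')
  | pe_mul t t' u u' : pinv_eq t t' -> pinv_eq u u' ->
      pinv_eq (TMul t u) (TMul t' u')
  | pe_addA t u v : pinv_eq (TAdd t (TAdd u v)) (TAdd (TAdd t u) v)
  | pe_addC t u : pinv_eq (TAdd t u) (TAdd u t)
  | pe_add0 t : pinv_eq (TAdd (TC 0) t) t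
  | pe_addN t : pinv_eq (TAdd (TOpp t) t) (TC 0)
  | pe_mulA t u v : pinv_eq (TMul t (TMul u v)) (TMul (TMul t u) v)
  | pe_mulC t u : pinv_eq (TMul t u) (TMul u t)
  | pe_mul1 t : pinv_eq (TMul (TC 1) t) t
  | pe_mulDl t u v : pinv_eq (TMul (TAdd t u) v) (TAdd (TMul t v) (TMul u v))
  | pe_Cadd a b : pinv_eq (TC (a + b)) (TAdd (TC a) (TC b))
  | pe_Cmul a b : pinv_eq (TC (a * b)) (TMul (TC a) (TC b))
  | pe_rel1 s : pinv_eq (TMul (TC s) (TMul (TX s) (TX s))) (TX s)
  | pe_rel2 s : pinv_eq (TMul (TMul (TC s) (TC s)) (TX s)) (TC s).

(* The canonical map eta : R -> R^{(-1)}R, r |-> class of r, is bijective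
   (injective and surjective onto the quotient). *)
Definition eta_bijective (R : comPzRingType) : Prop :=
  (forall a b : R, pinv_eq (TC a) (TC b) -> a = b) /\
  (forall t : pterm R, exists r : R, pinv_eq t (TC r)).

(* Both conditions are equivalent to von Neumann regularity: every [a] has an
   [r] with [a = a^2 r].

   If [eta] is bijective, the class of [x_a] is some [r], and the relation
   [a^2 x_a = a] gives [a = a^2 r].  Conversely, in a regular ring every [s]
   has a pointwise inverse, and pointwise inverses are unique; so evaluating
   [x_s] at the pointwise inverse of [s] respects the relations and inverts
   [eta].

   Flat implies regular: tensoring the injection [a R -> R] with [R / a R]
   kills [a (x) 1 = 1 (x) a], while the bilinear map [(a x, y) |-> a x y] into
   [R / a^2 R] sends the corresponding element to [a]; hence [a \in a^2 R].

   Regular implies flat: by the equational criterion, a vanishing tensor in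
   [N' (x) M] comes from finitely many linear relations in [M] and a linear
   system over [R] with right-hand sides in [N] that is solvable in [N'].
   Over a regular ring such a system is solvable in [N]: each finitely
   generated ideal contains a unit for its generators, which lets one
   eliminate the equations one at a time. *)

From HB Require Import structures.
From Stdlib Require Import Setoid Morphisms Ring_theory Ring.
(* Stdlib's setoid [ring], needed on [pinv_eq], is shadowed by the [ring] of
   algebra-tactics imported next. *)
Ltac pterm_ring := ring.
From mathcomp Require Import all_boot all_order all_algebra ring boolp functions.
Set Implicit Arguments. Unset Strict Implicit. Unset Printing Implicit Defensive.
Import GRing.Theory.
Local Open Scope ring_scope.

Section LinearMaps.
Variables (R : pzRingType) (U V : lmodType R) (f : U -> V).
Hypothesis linf : is_linear f.

Lemma is_linear0 : f 0 = 0.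
Proof. by have := linf (-1) 0 0; rewrite scaler0 addr0 scaleN1r addNr. Qed.

Lemma is_linearD x y : f (x + y) = f x + f y.
Proof. by have := linf 1 x y; rewrite !scale1r. Qed.

Lemma is_linearZ c x : f (c *: x) = c *: f x.
Proof. by have := linf c x 0; rewrite !addr0 is_linear0 addr0. Qed.

Lemma is_linearB x y : f (x - y) = f x - f y.
Proof. by rewrite -scaleN1r is_linearD is_linearZ scaleN1r. Qed.

Lemma is_linear_sum (I : Type) (r : seq I) (P : pred I) (F : I -> U) :
  f (\sum_(i <- r | P i) F i) = \sum_(i <- r | P i) f (F i).
Proof.
elim: r => [|i r IH]; first by rewrite !big_nil is_linear0.
by rewrite !big_cons; case: (P i); rewrite ?is_linearD IH.
Qed.

End LinearMaps.

Record submod (R : pzRingType) (V : lmodType R) := Submod {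
  submod_mem :> V -> Prop;
  submod0 : submod_mem 0;
  submodD u v : submod_mem u -> submod_mem v -> submod_mem (u + v);
  submodZ (a : R) u : submod_mem u -> submod_mem (a *: u) }.

Section QuotientModule.
Variables (R : pzRingType) (V : lmodType R) (S : submod V).

Lemma submodN u : S u -> S (- u).
Proof. by move=> Su; rewrite -scaleN1r; apply: submodZ. Qed.

Lemma submodB u v : S u -> S v -> S (u - v).
Proof. by move=> Su Sv; apply: submodD => //; apply: submodN. Qed.

(* An element of [V / S] is a coset [v + S], represented by its membership predicate. *)
Definition coset (v : V) : V -> Prop := fun u => S (u - v).

Record quotmod := Quotmod { qset : V -> Prop; qsetP : exists v, qset = coset v }.
HB.instance Definition _ := gen_eqMixin quotmod.
HB.instance Definition _ := gen_choiceMixin quotmod.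

Lemma quotmod_inj (a b : quotmod) : qset a = qset b -> a = b.
Proof.
by case: a b => [A HA] [B HB] /= eqAB; subst B; congr Quotmod; apply: Prop_irrelevance.
Qed.

Definition qproj (v : V) : quotmod := Quotmod (ex_intro _ v erefl).
Definition qrep (a : quotmod) : V := proj1_sig (cid (qsetP a)).

Lemma qproj_qrep a : qproj (qrep a) = a.
Proof. by apply: quotmod_inj; rewrite /qrep; case: cid => v /= ->. Qed.

Lemma quotmod_ind (P : quotmod -> Prop) : (forall v, P (qproj v)) -> forall a, P a.
Proof. by move=> Pproj a; rewrite -(qproj_qrep a). Qed.

Lemma eq_qproj u v : qproj u = qproj v <-> S (u - v).
Proof.
split=> [/(congr1 qset) /= eq_uv | Suv].
  have: coset u u by rewrite /coset subrr; apply: submod0.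
  by rewrite eq_uv.
apply: quotmod_inj; apply: funext => x /=; apply: propext; rewrite /coset.
split=> Sx.
  have -> : x - v = (x - u) + (u - v) by rewrite addrA subrK.
  exact: submodD.
have -> : x - u = (x - v) - (u - v) by rewrite opprB addrA subrK.
exact: submodB.
Qed.

Lemma qrep_qproj v : S (qrep (qproj v) - v).
Proof. by apply/eq_qproj; rewrite qproj_qrep. Qed.

Definition qzero := qproj 0.
Definition qadd a b := qproj (qrep a + qrep b).
Definition qopp a := qproj (- qrep a).
Definition qscale (c : R) a := qproj (c *: qrep a).

Lemma qaddE u v : qadd (qproj u) (qproj v) = qproj (u + v).
Proof.
apply/eq_qproj; rewrite opprD addrACA.
by apply: submodD; apply: qrep_qproj.
Qed.

Lemma qoppE u : qopp (qproj u) = qproj (- u).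
Proof. by apply/eq_qproj; rewrite -opprD; apply/submodN/qrep_qproj. Qed.

Lemma qscaleE c u : qscale c (qproj u) = qproj (c *: u).
Proof. by apply/eq_qproj; rewrite -scalerBr; apply/submodZ/qrep_qproj. Qed.

Lemma qaddA : associative qadd.
Proof.
elim/quotmod_ind=> u; elim/quotmod_ind=> v; elim/quotmod_ind=> w.
by rewrite !qaddE addrA.
Qed.

Lemma qaddC : commutative qadd.
Proof. by elim/quotmod_ind=> u; elim/quotmod_ind=> v; rewrite !qaddE addrC. Qed.

Lemma qadd0 : left_id qzero qadd.
Proof. by elim/quotmod_ind=> u; rewrite qaddE add0r. Qed.

Lemma qaddN : left_inverse qzero qopp qadd.
Proof. by elim/quotmod_ind=> u; rewrite qoppE qaddE addNr. Qed.

HB.instance Definition _ := GRing.isZmodule.Build quotmod qaddA qaddC qadd0 qaddN.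

Lemma qprojD u v : qproj (u + v) = qproj u + qproj v.
Proof. by rewrite -qaddE. Qed.

Lemma qscaleA a b v : qscale a (qscale b v) = qscale (a * b) v.
Proof. by elim/quotmod_ind: v => v; rewrite !qscaleE scalerA. Qed.

Lemma qscale1 : left_id 1 qscale.
Proof. by elim/quotmod_ind=> v; rewrite qscaleE scale1r. Qed.

Lemma qscaleDr : right_distributive qscale +%R.
Proof.
move=> a; elim/quotmod_ind=> u; elim/quotmod_ind=> v.
by rewrite -qprojD !qscaleE -qprojD scalerDr.
Qed.

Lemma qscaleDl v : {morph qscale^~ v : a b / a + b}.
Proof. by elim/quotmod_ind: v => v a b; rewrite !qscaleE -qprojD scalerDl. Qed.

HB.instance Definition _ :=
  GRing.Zmodule_isLmodule.Build R quotmod qscaleA qscale1 qscaleDr qscaleDl.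

Lemma qprojZ c u : qproj (c *: u) = c *: qproj u.
Proof. by rewrite -qscaleE. Qed.

Lemma qproj_eq0 u : qproj u = 0 <-> S u.
Proof. by rewrite -[0]/(qproj 0) eq_qproj subr0. Qed.

Lemma qproj_sum (I : Type) (r : seq I) (F : I -> V) :
  qproj (\sum_(i <- r) F i) = \sum_(i <- r) qproj (F i).
Proof. by elim: r => [|i r IH]; rewrite ?big_nil ?big_cons ?qprojD ?IH. Qed.

End QuotientModule.

Lemma sum_fibers_seq (A T : eqType) (V : nmodType) (ks : seq T) (l : seq A)
    (key : A -> T) (F : A -> T -> V) :
  uniq ks -> {subset map key l <= ks} ->
  \sum_(t <- ks) \sum_(q <- l | key q == t) F q t = \sum_(q <- l) F q (key q).
Proof.
move=> uks lks; rewrite (exchange_big_dep predT) //=; apply: eq_big_seq => q ql.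
rewrite -big_filter; have -> : [seq t <- ks | key q == t] = [:: key q].
  rewrite -(filter_pred1_uniq uks (lks _ (map_f key ql))).
  by apply: eq_filter => t; rewrite eq_sym.
by rewrite big_seq1.
Qed.

Lemma sum_scaleBl (R : comPzRingType) (V : lmodType R) (I : Type) (js : seq I)
    (a b : I -> R) (s : R) (v : I -> V) :
  \sum_(j <- js) (a j - b j * s) *: v j
    = \sum_(j <- js) a j *: v j - s *: \sum_(j <- js) b j *: v j.
Proof.
by rewrite scaler_sumr -sumrB; apply: eq_bigr => j _; rewrite scalerBl scalerA mulrC.
Qed.

Lemma sum_scaleBr (R : pzRingType) (V : lmodType R) (I : Type) (js : seq I)
    (a b : I -> R) (v : I -> V) (w : V) :
  \sum_(j <- js) a j *: (v j - b j *: w)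
    = \sum_(j <- js) a j *: v j - (\sum_(j <- js) a j * b j) *: w.
Proof.
by rewrite scaler_suml -sumrB; apply: eq_bigr => j _; rewrite scalerBr scalerA.
Qed.

Section TensorModel.
Variables (R : comPzRingType) (N M : lmodType R).

Definition coeff (l : seq (R * M)) (m : M) : R := \sum_(q <- l | q.2 == m) q.1.

Definition relation_sum (w : seq (N * seq (R * M))) : M -> N :=
  fun m => \sum_(yl <- w) coeff yl.2 m *: yl.1.

Definition is_relation (l : seq (R * M)) : Prop := \sum_(q <- l) q.1 *: q.2 = 0.

Definition relations_submod : submod (M -> N).
Proof.
apply: (@Submod _ _ (fun v => exists2 w, forall yl, yl \in w -> is_relation yl.2
                                  & v = relation_sum w)).
- by exists [::] => //; apply: funext => m; rewrite /relation_sum big_nil.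
- move=> _ _ [w1 w1rel ->] [w2 w2rel ->]; exists (w1 ++ w2).
    by move=> yl; rewrite mem_cat => /orP[/w1rel | /w2rel].
  by apply: funext => m; rewrite /relation_sum big_cat.
- move=> c _ [w wrel ->]; exists [seq (c *: yl.1, yl.2) | yl <- w].
    by move=> yl' /mapP[yl ylw ->]; apply: (wrel yl ylw).
  apply: funext => m; rewrite scalrfctE /relation_sum big_map scaler_sumr.
  by apply: eq_bigr => yl _; rewrite !scalerA mulrC.
Defined.

(* [(M -> N) / relations_submod] is a model of [N (x) M], with [n (x) m]
   represented by the function supported at [m] with value [n]. *)
Definition tensor_fun (n : N) (m : M) : quotmod relations_submod :=
  qproj _ (fun m' => if m == m' then n else 0).

Lemma is_bilinear_tensor_fun : is_bilinear tensor_fun.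
Proof.
split=> [m c n n' | n c m m']; rewrite -qprojZ -qprojD.
  congr qproj; apply: funext => m'; rewrite addrfctE scalrfctE /=.
  by case: ifP; rewrite ?scaler0 ?addr0.
apply/eq_qproj; exists [:: (n, [:: (1, c *: m + m'); (- c, m); (-1, m')])].
  move=> yl; rewrite inE => /eqP -> /=.
  rewrite /is_relation !big_cons big_nil /=.
  by rewrite scale1r scaleNr scaleN1r addr0 -opprD subrr.
apply: funext => m''; rewrite opprfctE !addrfctE scalrfctE.
rewrite /relation_sum /coeff big_seq1 /= !big_cons big_nil /=.
case: (c *: m + m' == m''); case: (m == m''); case: (m' == m'');
  by rewrite ?scaler0 ?addr0 ?add0r ?subr0 ?sub0r ?oppr0 ?opprD ?scalerDl
             ?scaleNr ?scaleN1r ?scale1r ?scale0r.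
Qed.

Lemma tensor_zero_equational (s : seq (N * M)) : tensor_zero s ->
  exists (ks : seq M) (p : nat) (y : 'I_p -> N) (r : 'I_p -> M -> R),
  [/\ uniq ks, {subset map snd s <= ks},
      forall j, \sum_(t <- ks) r j t *: t = 0
    & forall t, t \in ks -> \sum_(q <- s | q.2 == t) q.1 = \sum_j r j t *: y j].
Proof.
move/(_ _ _ is_bilinear_tensor_fun); rewrite -qproj_sum => /qproj_eq0[w wrel sw].
pose ks := undup (map snd s ++ flatten [seq map snd yl.2 | yl <- w]).
pose yl0 := ((0 : N), ([::] : seq (R * M))).
exists ks, (size w), (fun j => (nth yl0 w j).1), (fun j => coeff (nth yl0 w j).2).
split=> [|q qs|j|t _].
- exact: undup_uniq.
- by rewrite mem_undup mem_cat qs.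
- rewrite -[RHS](wrel _ (mem_nth yl0 (ltn_ord j))).
  under eq_bigr do rewrite /coeff scaler_suml.
  apply: sum_fibers_seq (undup_uniq _) _ => _ /mapP[q qj ->].
  rewrite mem_undup mem_cat; apply/orP; right; apply/flatten_mapP.
  by exists (nth yl0 w j); [apply: mem_nth | apply: map_f].
- have := congr1 (fun v => v t) sw; rewrite /relation_sum (big_nth yl0) big_mkord.
  by move=> <-; rewrite fct_sumE big_mkcond.
Qed.

End TensorModel.

Definition von_neumann_regular (R : comPzRingType) :=
  forall a : R, exists r : R, a = a * a * r.

Section PtermRing.
Variable R : comPzRingType.

Local Notation "t ≡ u" := (@pinv_eq R t u) (at level 70).

#[local] Instance pinv_eq_equiv : Equivalence (@pinv_eq R).
Proof. by split; [exact: pe_refl | exact: pe_sym | exact: pe_trans]. Qed.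

#[local] Instance TAdd_proper :
  Proper (@pinv_eq R ==> @pinv_eq R ==> @pinv_eq R) (@TAdd R).
Proof. by move=> ? ? ? ? ? ?; apply: pe_add. Qed.

#[local] Instance TMul_proper :
  Proper (@pinv_eq R ==> @pinv_eq R ==> @pinv_eq R) (@TMul R).
Proof. by move=> ? ? ? ? ? ?; apply: pe_mul. Qed.

#[local] Instance TOpp_proper : Proper (@pinv_eq R ==> @pinv_eq R) (@TOpp R).
Proof. by move=> ? ? ?; apply: pe_opp. Qed.

Definition TSub (t u : pterm R) := TAdd t (TOpp u).

Lemma pterm_ring_theory :
  ring_theory (@TC R 0) (@TC R 1) (@TAdd R) (@TMul R) TSub
    (@TOpp R) (@pinv_eq R).
Proof.
split; [exact: pe_add0 | exact: pe_addC | exact: pe_addA | exact: pe_mul1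
       | exact: pe_mulC | exact: pe_mulA | exact: pe_mulDl | reflexivity | ].
by move=> t; setoid_rewrite pe_addC; apply: pe_addN.
Qed.

Lemma pterm_ring_ext :
  ring_eq_ext (@TAdd R) (@TMul R) (@TOpp R) (@pinv_eq R).
Proof. by split; typeclasses eauto. Qed.

Add Ring pterm_ring : pterm_ring_theory (setoid pinv_eq_equiv pterm_ring_ext).

Lemma TC_opp (a : R) : @TC R (- a) ≡ TOpp (TC a).
Proof.
transitivity (TAdd (TAdd (@TC R (- a)) (TC a)) (TOpp (TC a))); first by pterm_ring.
by rewrite -pe_Cadd addNr; apply: pe_add0.
Qed.

(* Pointwise inverses are unique: for two of them, [x] and [b], of [s] one
   has [x = s x^2 = s^2 b x^2 = b s x] and symmetrically [b = x s b]. *)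
Lemma TX_pinv_eq (s b : R) : s * s * b = s -> s * (b * b) = b -> TX s ≡ TC b.
Proof.
move=> sbs bsb.
have Cs2b : TMul (TMul (TC s) (TC s)) (TC b) ≡ TC s.
  by rewrite -!pe_Cmul sbs; reflexivity.
have Csb2 : TMul (TC s) (TMul (TC b) (TC b)) ≡ TC b.
  by rewrite -!pe_Cmul bsb; reflexivity.
have x_bsx : TX s ≡ TMul (TMul (TC b) (TC s)) (TX s).
  rewrite -{1}(pe_rel1 s) -{1}Cs2b -{3}(pe_rel1 s); pterm_ring.
have b_xsb : TC b ≡ TMul (TMul (TX s) (TC s)) (TC b).
  rewrite -{1}Csb2 -{1}(pe_rel2 s) -{3}Csb2; pterm_ring.
by rewrite {1}x_bsx {2}b_xsb; pterm_ring.
Qed.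

Section Regular.
Hypothesis regR : von_neumann_regular R.

Lemma regular_pinv_exists (a : R) :
  exists b, (a * a * b == a) && (a * (b * b) == b).
Proof.
have [r ar] := regR a; exists (r * r * a); apply/andP; split; apply/eqP.
  have -> : a * a * (r * r * a) = (a * a * r) * (a * r) by ring.
  by rewrite -ar mulrA -ar.
have -> : a * (r * r * a * (r * r * a)) = r * r * r * (a * a * r) * a by ring.
rewrite -ar; have -> : r * r * r * a * a = r * r * (a * a * r) by ring.
by rewrite -ar.
Qed.

Definition pinv (a : R) : R := xchoose (regular_pinv_exists a).

Lemma pinvP (a : R) : a * a * pinv a = a /\ a * (pinv a * pinv a) = pinv a.
Proof. by have /andP[/eqP ? /eqP ?] := xchooseP (regular_pinv_exists a). Qed.

Fixpoint pterm_eval (t : pterm R) : R :=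
  match t with
  | TC r => r
  | TX s => pinv s
  | TAdd t u => pterm_eval t + pterm_eval u
  | TOpp t => - pterm_eval t
  | TMul t u => pterm_eval t * pterm_eval u
  end.

Lemma pterm_eval_eq t u : t ≡ u -> pterm_eval t = pterm_eval u.
Proof.
elim=> {t u} /= [// | t u _ -> // | t u v _ -> _ -> // | t t' u u' _ -> _ -> //
  | t t' _ -> // | t t' u u' _ -> _ -> // | * | * | * | * | * | * | * | * | // | //
  | s | s].
- exact: addrA.
- exact: addrC.
- exact: add0r.
- exact: addNr.
- exact: mulrA.
- exact: mulrC.
- exact: mul1r.
- exact: mulrDl.
- by case: (pinvP s).
- by case: (pinvP s).
Qed.

Lemma pterm_evalP t : t ≡ TC (pterm_eval t).
Proof.
elim: t => [r | s | t IHt u IHu | t IHt | t IHt u IHu] /=.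
- reflexivity.
- by case: (pinvP s) => ? ?; apply: TX_pinv_eq.
- by rewrite pe_Cadd; apply: pe_add.
- by rewrite TC_opp; apply: pe_opp.
- by rewrite pe_Cmul; apply: pe_mul.
Qed.

End Regular.

Lemma regular_eta_bijective : von_neumann_regular R -> eta_bijective R.
Proof.
move=> regR; split=> [a b /(pterm_eval_eq regR) // | t].
by exists (pterm_eval regR t); apply: pterm_evalP.
Qed.

Lemma eta_bijective_regular : eta_bijective R -> von_neumann_regular R.
Proof.
case=> TC_inj TX_surj a; have [r xr] := TX_surj (TX a); exists r.
by apply: TC_inj; rewrite -(pe_rel2 a) xr -!pe_Cmul; reflexivity.
Qed.

End PtermRing.

Section AbsolutelyFlatRegular.
Variables (R : comPzRingType) (a : R).

Definition ann_submod : submod R^o.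
Proof.
apply: (@Submod _ _ (fun x : R^o => a * x = 0)) => [|u v au av|c u au].
- by rewrite mulr0.
- by rewrite mulrDr au av addr0.
- by rewrite /GRing.scale /= mulrCA au mulr0.
Defined.

Definition principal_submod (b : R) : submod R^o.
Proof.
apply: (@Submod _ _ (fun x : R^o => exists t, x = b * t))
  => [|u v [t ->] [t' ->]|c u [t ->]].
- by exists 0; rewrite mulr0.
- by exists (t + t'); rewrite mulrDr.
- by exists (c * t); rewrite /GRing.scale /= mulrCA.
Defined.

Local Notation annq := (quotmod ann_submod).
Local Notation aR := (principal_submod a).
Local Notation a2R := (principal_submod (a * a)).

(* [R / ann a] is isomorphic to the submodule [a R] of [R]. *)
Definition ann_scale (q : annq) : R^o := a * qrep q.

Lemma ann_scaleE x : ann_scale (qproj _ x) = a * x.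
Proof.
by apply/eqP; rewrite -subr_eq0 -mulrBr; apply/eqP; exact: (qrep_qproj ann_submod).
Qed.

Lemma is_linear_ann_scale : is_linear ann_scale.
Proof.
move=> c; elim/quotmod_ind=> x; elim/quotmod_ind=> y.
by rewrite -qprojZ -qprojD !ann_scaleE /GRing.scale /=; ring.
Qed.

Lemma ann_scale_inj : injective ann_scale.
Proof.
elim/quotmod_ind=> x; elim/quotmod_ind=> y; rewrite !ann_scaleE => axy.
by apply/eq_qproj; rewrite /= mulrBr axy subrr.
Qed.

Definition ann_quot_mul (q : annq) (q' : quotmod aR) : quotmod a2R :=
  qproj a2R (a * qrep q * qrep q').

Lemma ann_quot_mulE x y :
  ann_quot_mul (qproj _ x) (qproj _ y) = qproj a2R (a * x * y).
Proof.
apply/eq_qproj; rewrite -[qrep (qproj _ x)](subrK x) -[qrep (qproj _ y)](subrK y).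
have ak : a * (qrep (qproj ann_submod x) - x) = 0 := qrep_qproj ann_submod x.
have [t ->] := qrep_qproj aR y; exists (x * t).
set k := qrep _ - x in ak *.
transitivity (a * a * (x * t) + a * k * (a * t + y)); first by ring.
by rewrite ak mul0r addr0.
Qed.

Lemma is_bilinear_ann_quot_mul : is_bilinear ann_quot_mul.
Proof.
split=> [q' c | q c]; elim/quotmod_ind=> x; elim/quotmod_ind=> y;
  [elim/quotmod_ind: q' => z | elim/quotmod_ind: q => z];
  by rewrite -qprojZ -qprojD !ann_quot_mulE -qprojZ -qprojD /GRing.scale /=;
     congr qproj; ring.
Qed.

(* [a (x) 1 = 1 (x) a = 0] in [R (x) R / a R]. *)
Lemma tensor_zero_ann_scale :
  tensor_zero [:: (ann_scale (qproj ann_submod 1), qproj aR 1)].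
Proof.
move=> P f [linf1 linf2]; rewrite big_seq1 /= ann_scaleE mulr1.
transitivity (f (a *: (1 : R^o)) (qproj aR 1)).
  by rewrite /GRing.scale /= mulr1.
rewrite (is_linearZ (linf1 _)) -(is_linearZ (linf2 _)) -qprojZ.
have -> : qproj aR (a *: (1 : R^o)) = 0 by apply/qproj_eq0; exists 1.
exact: is_linear0.
Qed.

End AbsolutelyFlatRegular.

Lemma absolutely_flat_regular (R : comPzRingType) :
  absolutely_flat R -> von_neumann_regular R.
Proof.
move=> flatR a.
have := flatR _ _ _ _ (is_linear_ann_scale (a := a)) (@ann_scale_inj _ a)
  [:: (qproj (ann_submod a) 1, qproj (principal_submod a) 1)]
  (@tensor_zero_ann_scale _ a) _ _ (@is_bilinear_ann_quot_mul _ a).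
by rewrite big_seq1 /= ann_quot_mulE !mulr1 => /qproj_eq0 [r ar]; exists r.
Qed.

Section RegularRing.
Variable R : comPzRingType.
Hypothesis regR : von_neumann_regular R.

(* If [e'] is a unit for [js], then [d := c j0 (1 - e')] satisfies [d e' = 0],
   and [r d + e'] is a unit for [j0 :: js], where [d = d^2 r]. *)
Lemma regular_local_unit (I : eqType) (c : I -> R) (js : seq I) : uniq js ->
  exists u : I -> R, forall j, j \in js -> (\sum_(i <- js) u i * c i) * c j = c j.
Proof.
elim: js => [_|j0 js IH /= /andP[j0js ujs]]; first by exists (fun=> 0).
have [u' u'P] := IH ujs; set e' := \sum_(i <- js) u' i * c i in u'P.
have e'e' : e' * e' = e'.
  rewrite {1}/e' mulr_suml; apply: eq_big_seq => i ijs.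
  by rewrite -mulrA [c i * _]mulrC u'P.
pose d := c j0 * (1 - e'); have [r dr] := regR d.
have de' : d * e' = 0 by rewrite /d -mulrA mulrBl e'e' mul1r subrr mulr0.
exists (fun i => if i == j0 then r * (1 - e') else u' i) => j.
have -> : \sum_(i <- j0 :: js) (if i == j0 then r * (1 - e') else u' i) * c i
          = r * d + e'.
  rewrite big_cons eqxx; congr (_ + _); first by rewrite /d; ring.
  rewrite /e'; apply: eq_big_seq => i ijs.
  by case: eqP ijs => // ->; rewrite (negPf j0js).
rewrite inE => /orP[/eqP -> | jjs].
- transitivity (r * c j0 * (d * e') + d * d * r + e' * c j0); first by rewrite /d; ring.
  by rewrite de' mulr0 add0r -dr /d; ring.
- transitivity (r * c j0 * (c j - e' * c j) + e' * c j); first by rewrite /d; ring.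
  by rewrite u'P // subrr mulr0 add0r.
Qed.

Section LiftSolutions.
Variables (N N' : lmodType R) (g : N -> N').
Hypotheses (linG : is_linear g) (injG : injective g).

(* [g] is pure.  By induction on the equations: if [e] is a unit for the
   coefficients [c j] of the first one, then [x t0 = e x t0] by injectivity,
   and subtracting [rho t] times the first equation from the others leaves
   one equation fewer. *)
Lemma regular_lift_solution (T : eqType) (p : nat) (y : 'I_p -> N') (ks : seq T)
    (r : 'I_p -> T -> R) (x : T -> N) :
  (forall t, t \in ks -> g (x t) = \sum_j r j t *: y j) ->
  exists z : 'I_p -> N, forall t, t \in ks -> x t = \sum_j r j t *: z j.
Proof.
elim: ks r x => [|t0 ks IH] r x gx; first by exists (fun=> 0).
pose c j := r j t0.
have [u uc] := regular_local_unit c (index_enum_uniq 'I_p).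
pose e := \sum_j u j * c j.
have ec j : e * c j = c j by apply: uc; apply: mem_index_enum.
have gx0 : g (x t0) = \sum_j c j *: y j by apply: gx; rewrite mem_head.
have ex0 : e *: x t0 = x t0.
  apply: injG; rewrite (is_linearZ linG) gx0 scaler_sumr.
  by apply: eq_bigr => j _; rewrite scalerA ec.
pose rho t := \sum_j u j * r j t.
pose r' j t := r j t - c j * rho t.
pose x' t := x t - rho t *: x t0.
have gx' t : t \in ks -> g (x' t) = \sum_j r' j t *: y j.
  move=> tks; rewrite (is_linearB linG) (is_linearZ linG) gx0 gx ?inE ?tks ?orbT //.
  by rewrite sum_scaleBl.
have [z' x'z'] := IH r' x' gx'.
pose C := \sum_j c j *: z' j.
have eC : e *: C = C.
  by rewrite scaler_sumr; apply: eq_bigr => j _; rewrite scalerA ec.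
exists (fun j => z' j - u j *: (C - x t0)) => t; rewrite inE sum_scaleBr.
case/orP=> [/eqP -> | tks].
- have -> : \sum_j c j * u j = e by apply: eq_bigr => j _; rewrite mulrC.
  by rewrite scalerBr eC ex0 opprB addrC subrK.
- have -> : \sum_j r j t * u j = rho t by apply: eq_bigr => j _; rewrite mulrC.
  have := x'z' t tks; rewrite /x' /r' sum_scaleBl => /eqP; rewrite subr_eq => /eqP ->.
  by rewrite scalerBr opprB addrA addrAC.
Qed.

End LiftSolutions.

End RegularRing.

Lemma regular_absolutely_flat (R : comPzRingType) :
  von_neumann_regular R -> absolutely_flat R.
Proof.
move=> regR M N N' g linG injG s /tensor_zero_equational[ks [p [y [r []]]]].
rewrite -map_comp => uks sks rel gsum P f [linf1 linf2].
pose x t := \sum_(q <- s | q.2 == t) q.1.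
have gx t : t \in ks -> g (x t) = \sum_j r j t *: y j.
  by move=> tks; rewrite (is_linear_sum linG) -gsum // big_map.
have [z xz] := regular_lift_solution regR linG injG gx.
transitivity (\sum_(t <- ks) f (x t) t).
  under [RHS]eq_bigr do rewrite (is_linear_sum (linf1 _)).
  by rewrite (sum_fibers_seq (fun q t => f q.1 t)).
transitivity (\sum_(t <- ks) \sum_j r j t *: f (z j) t).
  apply: eq_big_seq => t tks; rewrite xz // (is_linear_sum (linf1 t)).
  by apply: eq_bigr => j _; rewrite (is_linearZ (linf1 t)).
rewrite exchange_big big1 // => j _.
under eq_bigr do rewrite -(is_linearZ (linf2 (z j))).
by rewrite -(is_linear_sum (linf2 (z j))) rel (is_linear0 (linf2 _)).
Qed.

Theorem lemma4p6 (R : comPzRingType) :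
  absolutely_flat R <-> eta_bijective R.
Proof.
split=> [/absolutely_flat_regular | /eta_bijective_regular];
  [exact: regular_eta_bijective | exact: regular_absolutely_flat].
Qed.
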